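(* Let $A\subseteq\mathbb R^2$ be measurable and let $\gamma\in\mathbb R\setminus\{0,-1\}$. Let $\lambda,\eta:A\to(0,\infty)$ be intensity functions with $\int_A\lambda$, $\int_A\eta$, $\int_A\lambda^{\gamma+1}$, $\int_A\eta^{\gamma+1}$ and $\int_A\lambda\eta^\gamma$ all finite, and let $P$ and $Q$ be the distributions of the Poisson point processes on $A$ with intensities $\lambda$ and $\eta$, with densities $p,q$ as described in the context. Define the log $\gamma$-divergence $$\Delta_\gamma(P,Q)=-\frac1\gamma\log\frac{\mathbb E_P[q(\Xi)^\gamma]}{\{\mathbb E_Q[q(\Xi)^\gamma]\}^{\gamma/(\gamma+1)}\{\mathbb E_P[p(\Xi)^\gamma]\}^{1/(\gamma+1)}}$$ and the $\beta$-divergence between intensity functions $$D_\beta(\lambda,\eta)=-\frac1\beta\int_A\Big\{\lambda(s)\eta(s)^\beta-\frac{\beta}{\beta+1}\eta(s)^{\beta+1}-\frac{1}{\beta+1}\lambda(s)^{\beta+1}\Big\}\mathrm ds.$$ Then $\Delta_\gamma(P,Q)=D_\beta(\lambda,\eta)$ when $\beta=\gamma$.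
   Context: A Poisson point process on $A$ with intensity $\lambda$ (with $\Lambda=\int_A\lambda(s)\mathrm ds<\infty$) is the random pair $\Xi=(M,\{S_1,\dots,S_M\})$ where $M\sim\mathrm{Poisson}(\Lambda)$ and, given $M=m$, $S_1,\dots,S_m$ are i.i.d. with density $\lambda(s)/\Lambda$ on $A$. Its density at $\xi=(m,\{s_1,\dots,s_m\})$ is $p(\xi)=\exp(-\Lambda)\prod_{i=1}^m\lambda(s_i)$, in the sense that for any suitable $g$, $\mathbb E_P[g(\Xi)]=\sum_{m=0}^\infty\frac{1}{m!}\int_{A^m}g(m,\{s_1,\dots,s_m\})\,p(m,\{s_1,\dots,s_m\})\,\mathrm ds_1\cdots\mathrm ds_m$. Similarly $q(\xi)=\exp(-H)\prod_{i=1}^m\eta(s_i)$ with $H=\int_A\eta$. *)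

From HB Require Import structures.
From mathcomp Require Import all_boot all_order all_algebra.
From mathcomp Require Import all_classical all_reals all_analysis.
Set Implicit Arguments. Unset Strict Implicit. Unset Printing Implicit Defensive.
Import Order.TTheory GRing.Theory Num.Theory.
Local Open Scope classical_set_scope.
Local Open Scope ring_scope.

Section PPP.
Context (R : realType).

Definition leb2 := (@lebesgue_measure R \x @lebesgue_measure R)%E.

Fixpoint iint (A : set (R * R)) (m : nat) (F : seq (R * R) -> \bar R) : \bar R :=
  match m with
  | 0 => F [::]
  | m'.+1 => (\int[leb2]_(x in A) iint A m' (fun s => F (x :: s)))%E
  end.

Definition total_int (A : set (R * R)) (lam : R * R -> R) : R :=
  fine (\int[leb2]_(x in A) (lam x)%:E)%E.

(* Density of the Poisson point process with intensity lam at
   xi = (m, {s_1,...,s_m}) (represented by the list s, m = size s):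
   p(xi) = exp(-Lambda) * prod_i lam(s_i). *)
Definition ppp_density (A : set (R * R)) (lam : R * R -> R) (s : seq (R * R)) : R :=
  expR (- total_int A lam) * \prod_(x <- s) lam x.

Definition ppp_expect (A : set (R * R)) (lam : R * R -> R)
    (g : seq (R * R) -> R) : \bar R :=
  (\sum_(m <oo) (((m`!)%:R)^-1)%:E * iint A m (fun s => (g s * ppp_density A lam s)%:E))%E.

Definition log_gamma_div (A : set (R * R)) (gam : R) (lam eta : R * R -> R) : R :=
  let p := ppp_density A lam in
  let q := ppp_density A eta in
  - gam^-1 * ln (fine (ppp_expect A lam (fun s => q s `^ gam)) /
      ((fine (ppp_expect A eta (fun s => q s `^ gam))) `^ (gam / (gam + 1)) *
       (fine (ppp_expect A lam (fun s => p s `^ gam))) `^ ((gam + 1)^-1))).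

Definition beta_div (A : set (R * R)) (beta : R) (lam eta : R * R -> R) : R :=
  - beta^-1 * fine (\int[leb2]_(x in A)
      (lam x * eta x `^ beta - beta / (beta + 1) * eta x `^ (beta + 1)
       - (beta + 1)^-1 * lam x `^ (beta + 1))%:E)%E.

End PPP.

From HB Require Import structures.
From mathcomp Require Import all_boot all_order all_algebra.
From mathcomp Require Import all_classical all_reals all_analysis.
From mathcomp Require Import ring measurable_realfun.
Import Order.TTheory GRing.Theory Num.Theory numFieldNormedType.Exports.
Local Open Scope classical_set_scope.
Local Open Scope ring_scope.

(* Under the Poisson process with intensity mu, E[c * prod_i f(S_i)] equals
   c * exp (int_A mu f - int_A mu): the m-th term of the expectation is
   c e^(-Lambda) (int_A mu f)^m / m!, and these terms sum to an exponential
   series.  As q^gam = e^(-gam H) prod_i eta(S_i)^gam, each of the three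
   expectations in Delta_gam is the exponential of an affine expression in the
   totals Lambda, H and in the integrals of lam eta^gam, eta^(gam+1) and
   lam^(gam+1).  In the logarithm of the ratio the totals cancel, leaving -gam D_gam(lam, eta). *)

Section integrable_lemmas.
Context d (T : measurableType d) (R : realType) (mu : {measure set T -> \bar R}).
Implicit Types (D : set T) (f g : T -> R).

Lemma ge0_integrable_lty D f : measurable D -> measurable_fun D f ->
  (forall x, D x -> 0 <= f x) -> (\int[mu]_(x in D) (f x)%:E < +oo)%E ->
  mu.-integrable D (EFin \o f).
Proof.
move=> mD mf f0 fi; apply/integrableP; split; first exact/measurable_EFinP.
under eq_integral => x /[!inE] xD do rewrite /= ger0_norm ?f0//.
exact: fi.
Qed.

Lemma integrableBZ_EFin D (a : R) f g : measurable D ->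
  mu.-integrable D (EFin \o f) -> mu.-integrable D (EFin \o g) ->
  mu.-integrable D (EFin \o (fun x => f x - a * g x)).
Proof.
by move=> mD fi gi; apply: eq_integrable (integrableB mD fi (integrableZl mD a gi)).
Qed.

Lemma RintegralBZ D (a : R) f g : measurable D ->
  mu.-integrable D (EFin \o f) -> mu.-integrable D (EFin \o g) ->
  \int[mu]_(x in D) (f x - a * g x) =
  \int[mu]_(x in D) f x - a * \int[mu]_(x in D) g x.
Proof.
move=> mD fi gi; rewrite RintegralB ?RintegralZl//.
by apply: eq_integrable (integrableZl mD a gi).
Qed.

End integrable_lemmas.

Lemma eseries_expR (R : realType) (c L : R) :
  (\sum_(m <oo) ((m`!%:R)^-1)%:E * (c * L ^+ m)%:E)%E = (c * expR L)%:E.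
Proof.
have cvg_c_exp : (c * series (exp_coeff L) n) @[n --> \oo] --> c * expR L.
  by apply: cvgMr; exact: is_cvg_series_exp_coeff.
rewrite -(cvg_lim _ cvg_c_exp) // -EFin_lim; last exact: cvgP cvg_c_exp.
apply: congr_lim; apply: funext => n /=.
rewrite /series /= mulr_sumr sumEFin; congr EFin; apply: eq_bigr => k _.
by rewrite exp_coeffE /=; ring.
Qed.

Lemma powR_prod (R : realType) (I : eqType) (s : seq I) (f : I -> R) (g : R) :
  (forall i, i \in s -> 0 <= f i) ->
  (\prod_(i <- s) f i) `^ g = \prod_(i <- s) f i `^ g.
Proof.
elim: s => [|i s IH] f0; first by rewrite !big_nil powR1.
have f0s j : j \in s -> 0 <= f j by move=> js; apply: f0; rewrite in_cons js orbT.
rewrite !big_cons powRM ?IH ?f0 ?mem_head//.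
by rewrite big_seq_cond prodr_ge0// => j /andP[/f0s].
Qed.

Lemma mulr_powRD1 (R : realType) (x p : R) : 0 < x -> x * x `^ p = x `^ (p + 1).
Proof.
move=> x0; rewrite powRD; last by rewrite (gt_eqF x0) implybT.
by rewrite (powRr1 (ltW x0)) mulrC.
Qed.

Section poisson_expectation.
Context (R : realType) (A : set (R * R)).
Hypothesis mA : measurable A.
Local Notation leb2 := (@leb2 R).

Lemma eq_iint_in m (F G : seq (R * R) -> \bar R) :
  (forall s, (forall y, y \in s -> A y) -> F s = G s) -> iint A m F = iint A m G.
Proof.
elim: m F G => [|m IH] F G FG /=; first exact: FG.
apply: eq_integral => x /[!inE] xA; apply: IH => s sA; apply: FG => y.
by rewrite in_cons => /predU1P[->|/sA].
Qed.

Lemma eq_ppp_expect_in (mu : R * R -> R) (g h : seq (R * R) -> R) :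
  (forall s, (forall y, y \in s -> A y) -> g s = h s) ->
  ppp_expect A mu g = ppp_expect A mu h.
Proof.
move=> gh; apply: eq_eseriesr => m _; congr (_ * _)%E.
by apply: eq_iint_in => s sA; rewrite gh.
Qed.

Lemma iint_scaled_prod (f : R * R -> R) m (c : R) :
  leb2.-integrable A (EFin \o f) ->
  iint A m (fun s => (c * \prod_(y <- s) f y)%:E) =
  (c * (\int[leb2]_(x in A) f x) ^+ m)%:E.
Proof.
move=> fi; set I := \int[leb2]_(x in A) f x.
have fI : (\int[leb2]_(x in A) (f x)%:E = I%:E)%E by rewrite fineK// integrable_fin_num.
elim: m c => [|m IH] c /=; first by rewrite big_nil.
transitivity (\int[leb2]_(x in A) ((c * I ^+ m)%:E * (f x)%:E))%E.
  apply: eq_integral => x _.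
  rewrite (_ : (fun s => _) = fun s => (c * f x * \prod_(y <- s) f y)%:E).
    by rewrite IH -EFinM mulrAC.
  by apply: funext => s; rewrite big_cons mulrA.
rewrite integralZl; [|exact: mA|exact: fi].
by rewrite fI -EFinM exprS mulrC mulrCA.
Qed.

Lemma ppp_expect_scaled_prod (mu f : R * R -> R) (c : R) :
  leb2.-integrable A (EFin \o (fun x => mu x * f x)) ->
  ppp_expect A mu (fun s => c * \prod_(y <- s) f y) =
  (c * expR (\int[leb2]_(x in A) (mu x * f x) - total_int A mu))%:E.
Proof.
move=> mufi; rewrite expRD mulrA mulrAC -eseries_expR /ppp_expect.
apply: eq_eseriesr => m _; congr (_ * _)%E.
rewrite -iint_scaled_prod//; congr iint; apply: funext => s.
by rewrite /ppp_density big_split /=; congr EFin; ring.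
Qed.

Lemma ppp_density_powR (nu : R * R -> R) (g : R) (s : seq (R * R)) :
  (forall y, y \in s -> 0 <= nu y) ->
  ppp_density A nu s `^ g = expR (- g * total_int A nu) * \prod_(y <- s) nu y `^ g.
Proof.
move=> nu0; rewrite /ppp_density powRM ?expR_ge0//; last first.
  by rewrite big_seq_cond prodr_ge0// => y /andP[/nu0].
by rewrite powR_prod// -expRM; congr (expR _ * _); ring.
Qed.

Lemma ppp_expect_density_powR (mu nu : R * R -> R) (g : R) :
  (forall x, A x -> 0 <= nu x) ->
  leb2.-integrable A (EFin \o (fun x => mu x * nu x `^ g)) ->
  ppp_expect A mu (fun s => ppp_density A nu s `^ g) =
  (expR (\int[leb2]_(x in A) (mu x * nu x `^ g) - total_int A mu
          - g * total_int A nu))%:E.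
Proof.
move=> nu0 fi; set c := expR (- g * total_int A nu).
rewrite (@eq_ppp_expect_in _ _ (fun s => c * \prod_(y <- s) nu y `^ g)).
  by rewrite ppp_expect_scaled_prod// -expRD addrC mulNr.
by move=> s sA; apply: ppp_density_powR => y /sA/nu0.
Qed.

Lemma ppp_expect_own_density_powR (nu : R * R -> R) (g : R) :
  (forall x, A x -> 0 < nu x) ->
  leb2.-integrable A (EFin \o (fun x => nu x `^ (g + 1))) ->
  ppp_expect A nu (fun s => ppp_density A nu s `^ g) =
  (expR (\int[leb2]_(x in A) nu x `^ (g + 1) - total_int A nu
          - g * total_int A nu))%:E.
Proof.
move=> nu0 fi; have nu_powRD1 : {in A, forall x, nu x * nu x `^ g = nu x `^ (g + 1)}.
  by move=> x /[!inE] /nu0/mulr_powRD1.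
rewrite ppp_expect_density_powR.
- suff -> : \int[leb2]_(x in A) (nu x * nu x `^ g) =
           \int[leb2]_(x in A) nu x `^ (g + 1) by [].
  exact: eq_Rintegral.
- by move=> x /nu0/ltW.
- by apply: eq_integrable fi => // x /nu_powRD1 /= ->.
Qed.

End poisson_expectation.

Lemma ln_expR_ratio (R : realType) (a b c u v : R) :
  ln (expR a / (expR b `^ u * expR c `^ v)) = a - (b * u + c * v).
Proof. by rewrite -!expRM -expRD -expRB expRK. Qed.

Theorem mainTheorem10 (R : realType) (A : set (R * R)) (gam : R)
    (lam eta : R * R -> R) :
  measurable A ->
  gam != 0 -> gam != -1 ->
  measurable_fun A lam -> measurable_fun A eta ->
  (forall x, A x -> 0 < lam x) -> (forall x, A x -> 0 < eta x) ->
  (\int[@leb2 R]_(x in A) (lam x)%:E < +oo)%E ->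
  (\int[@leb2 R]_(x in A) (eta x)%:E < +oo)%E ->
  (\int[@leb2 R]_(x in A) (lam x `^ (gam + 1))%:E < +oo)%E ->
  (\int[@leb2 R]_(x in A) (eta x `^ (gam + 1))%:E < +oo)%E ->
  (\int[@leb2 R]_(x in A) (lam x * eta x `^ gam)%:E < +oo)%E ->
  log_gamma_div A gam lam eta = beta_div A gam lam eta.
Proof.
move=> mA g0 g1 ml me lam0 eta0 _ _ lam_g1 eta_g1 lam_eta_g.
have i_le : (@leb2 R).-integrable A (EFin \o fun x => lam x * eta x `^ gam).
  apply: ge0_integrable_lty => //.
    by apply: measurable_funM => //; exact: (measurableT_comp (measurable_powR _) me).
  by move=> x xA; rewrite mulr_ge0 ?powR_ge0 ?ltW ?lam0.
have i_ll : (@leb2 R).-integrable A (EFin \o fun x => lam x `^ (gam + 1)).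
  apply: ge0_integrable_lty => // [|x _]; last exact: powR_ge0.
  exact: measurableT_comp (measurable_powR _) ml.
have i_ee : (@leb2 R).-integrable A (EFin \o fun x => eta x `^ (gam + 1)).
  apply: ge0_integrable_lty => // [|x _]; last exact: powR_ge0.
  exact: measurableT_comp (measurable_powR _) me.
rewrite /log_gamma_div /= ppp_expect_density_powR ?ppp_expect_own_density_powR//;
  last by move=> x /eta0/ltW.
rewrite ln_expR_ratio /beta_div -[fine _]/(\int[@leb2 R]_(x in A) _).
rewrite !RintegralBZ//; last exact: integrableBZ_EFin.
have g1' : gam + 1 != 0 by rewrite addr_eq0.
by field; rewrite g1' g0.
Qed.
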